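(* Let $\mathbf{c}=\{c_n\}_{n=-\infty}^{\infty}$ be a complex sequence such that, for some $\theta_0\in[0,\pi/2)$, $$c_n\pm c_{-n}\in K(\theta_0),\qquad n=1,2,\dots.$$ Suppose there exist a natural number $N_0$ and a constant $M(\mathbf c)>0$ such that $$\sum_{n=m}^{2m}|c_n-c_{n+1}|\le M(\mathbf c)\max_{m\le n<m+N_0}|c_n|\qquad\text{for all } m=1,2,\dots.$$ Let $f(x)=\sum_{k=-\infty}^{\infty}c_k e^{ikx}:=\lim_{n\to\infty}\sum_{k=-n}^{n}c_ke^{ikx}$ at every point $x$ where this limit exists, and $S_n(f,x)=\sum_{k=-n}^{n}c_ke^{ikx}$. Then ($f\in C_{2\pi}$ and $\lim_{n\to\infty}\|f-S_n(f)\|=0$) holds if and only if both $$\lim_{n\to\infty}nc_n=0\qquad\text{and}\qquad\sum_{n=1}^{\infty}|c_n+c_{-n}|<\infty.$$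
   Context: For $\theta\in[0,\pi/2]$, $K(\theta)=\{z\in\mathbb C: |\arg z|\le\theta\}$. $C_{2\pi}$ is the space of complex-valued continuous $2\pi$-periodic functions on $\mathbb R$ with norm $\|g\|=\max_{x\in\mathbb R}|g(x)|$. *)

From Stdlib Require Import Reals ZArith List.
From Coquelicot Require Export Coquelicot.
Open Scope R_scope.

Definition cis (t : R) : C := (cos t, sin t).

(* |arg z| <= theta, with arg the principal argument in (-pi, pi];
   convention: z = 0 belongs to the (closed) sector K(theta). *)
Definition Ksector (theta : R) (z : C) : Prop :=
  z = 0%C \/
  exists t : R, - PI < t <= PI /\ z = (Cmod z * cos t, Cmod z * sin t)%R
                /\ Rabs t <= theta.

(* S_n(x) = sum_{k=-n}^{n} c_k e^{ikx}, reindexed k = j - n, j = 0..2n *)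
Definition Spart (c : Z -> C) (n : nat) (x : R) : C :=
  sum_n (fun j : nat =>
           let k := (Z.of_nat j - Z.of_nat n)%Z in
           Cmult (c k) (cis (IZR k * x))) (2 * n).

Definition var_block (c : Z -> C) (m : nat) : R :=
  sum_n_m (fun n : nat => Cmod (Cminus (c (Z.of_nat n)) (c (Z.of_nat n + 1)%Z)))
          m (2 * m).

(* max_{m <= n < m + N0} |c_n|  (N0 >= 1 assumed where used) *)
Definition max_block (c : Z -> C) (N0 m : nat) : R :=
  fold_right Rmax 0 (map (fun n : nat => Cmod (c (Z.of_nat n))) (seq m N0)).

(* Write [S_m - S_n] as [sum_(n<k<=m) t_k] with [a_k = c_k + c_{-k}] and
   [t_k(x) = c_k e^{ikx} + c_{-k} e^{-ikx} = a_k e^{-ikx} + 2 i c_k sin (k x)].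

   If [k c_k -> 0] and [sum |a_k| < oo]: once [k |c_k| <= eps] for [k >= P], summing the block
   condition over the dyadic blocks [[p, 2p]], [[2p, 4p]], ... gives
   [sum_(k>=p) |c_k - c_{k+1}| <= 2 M eps / p] for [p >= P].  The sine series
   [sum c_k sin (k x)] then has uniformly small tails, by a termwise estimate on the
   frequencies [k <= 1/|sin (x/2)|] and summation by parts on the others (using
   [|sin (k x)| <= 2 k |sin (x/2)|] and [|sum_(j=p..q) sin (j x)| <= 1/|sin (x/2)|]).  So [S_n]
   is uniformly Cauchy, and its uniform limit is continuous and 2pi-periodic.

   Conversely, let [S_n] converge uniformly.  As [a_k] and [b_k = c_k - c_{-k}] lie in the
   sector [K(theta0)], [Re a_k >= cos theta0 |a_k|] and [Re b_k >= cos theta0 |b_k|].  At [x = 0],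
   [S_m - S_n = sum a_k], which gives [sum |a_k| < oo].  For [D = S_2p - S_p] and [x = pi/(4p)],
   [D(x) - D(-x) = 2 i sum_(p<k<=2p) b_k sin (k x)] with [sin (k x) >= 1/2], which gives
   [sum_(p<k<=2p) |b_k| -> 0].  Hence [sum_(p<k<=2p) |c_k| -> 0], and the block condition, which
   bounds [|c_n|] by [(1 + M)] times the sum of [|c_j|] over any window of length [N0] starting
   in [[n/2, n]], upgrades this to [n c_n -> 0]. *)

From Stdlib Require Import Reals ZArith Lia Lra List.
From Coquelicot Require Import Coquelicot.
Open Scope R_scope.

(* Sums in [R_AbelianMonoid] yield equalities at its carrier type, unknown to [ring]. *)
Ltac ring_R := change plus with Rplus; match goal with |- ?a = ?b => change (@eq R a b); ring end.

Lemma sum_n_m_le_loc (a b : nat -> R) (n m : nat) :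
  (forall k, (n <= k <= m)%nat -> a k <= b k) -> sum_n_m a n m <= sum_n_m b n m.
Proof.
  intros Hab.
  rewrite (sum_n_m_ext_loc a (fun k => Rmin (a k) (b k)))
    by (intros k Hk; rewrite Rmin_left; auto).
  apply sum_n_m_le; intros k; apply Rmin_r.
Qed.

Lemma sum_n_m_nonneg (a : nat -> R) (n m : nat) :
  (forall k, 0 <= a k) -> 0 <= sum_n_m a n m.
Proof.
  intros Ha. apply Rle_trans with (sum_n_m (fun _ => 0) n m).
  - rewrite sum_n_m_const. lra.
  - apply sum_n_m_le; auto.
Qed.

Lemma sum_n_m_le_widen (a : nat -> R) (p q q' : nat) :
  (forall k, 0 <= a k) -> (q <= q')%nat -> sum_n_m a p q <= sum_n_m a p q'.
Proof.
  intros Ha Hq. destruct (le_lt_dec p q) as [Hpq|Hpq].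
  - rewrite (sum_n_m_Chasles a p q q') by lia.
    generalize (sum_n_m_nonneg a (S q) q' Ha). change plus with Rplus. lra.
  - rewrite (sum_n_m_zero a p q) by lia. now apply sum_n_m_nonneg.
Qed.

Lemma le_sum_n_m_of_nonneg (a : nat -> R) (n m k : nat) :
  (forall j, 0 <= a j) -> (n <= k <= m)%nat -> a k <= sum_n_m a n m.
Proof.
  intros Ha Hk. rewrite (sum_n_m_Chasles a n k m) by lia. change plus with Rplus.
  assert (Hhead : a k <= sum_n_m a n k).
  { destruct (Nat.eq_dec n k) as [->|Hnk]; [rewrite sum_n_n; lra|].
    destruct k as [|k]; [lia|]. rewrite sum_n_Sm by lia. change plus with Rplus.
    generalize (sum_n_m_nonneg a n k Ha). lra. }
  generalize (sum_n_m_nonneg a (S k) m Ha). lra.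
Qed.

Lemma fold_right_Rmax_map_le {A : Type} (g : A -> R) (l : list A) (b : R) :
  0 <= b -> (forall y, In y l -> g y <= b) -> fold_right Rmax 0 (map g l) <= b.
Proof.
  intros Hb. induction l as [|y l IH]; intros Hl; [exact Hb|].
  simpl. apply Rmax_lub; [apply Hl; now left | apply IH; intros z Hz; apply Hl; now right].
Qed.

Lemma sum_n_m_le_of_dyadic_blocks (d : nat -> R) (P : nat) (B : R) :
  (1 <= P)%nat -> (forall k, 0 <= d k) ->
  (forall m, (P <= m)%nat -> sum_n_m d m (2 * m) <= B / INR m) ->
  forall p q, (P <= p)%nat -> sum_n_m d p q <= 2 * B / INR p.
Proof.
  intros HP Hd Hblock p q. remember (q - p)%nat as r eqn:Hr.
  revert p Hr. induction r as [r IH] using lt_wf_ind. intros p Hr Hp.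
  assert (Hp0 : 0 < INR p) by (apply lt_0_INR; lia).
  assert (Hbp := Hblock p Hp).
  assert (HB : 0 <= B / INR p) by (generalize (sum_n_m_nonneg d p (2 * p) Hd); lra).
  destruct (le_lt_dec q (2 * p)) as [Hq|Hq].
  - eapply Rle_trans; [apply (sum_n_m_le_widen d p q (2 * p) Hd Hq)|].
    replace (2 * B / INR p) with (B / INR p + B / INR p) by (field; lra). lra.
  - rewrite (sum_n_m_Chasles d p (2 * p - 1) q) by lia. change plus with Rplus.
    replace (S (2 * p - 1)) with (2 * p)%nat by lia.
    assert (Hfirst : sum_n_m d p (2 * p - 1) <= B / INR p)
      by (eapply Rle_trans; [apply (sum_n_m_le_widen d p _ (2 * p) Hd); lia | exact Hbp]).
    assert (Hrest : sum_n_m d (2 * p) q <= 2 * B / INR (2 * p))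
      by (apply (IH (q - 2 * p)%nat); lia).
    replace (2 * B / INR (2 * p)) with (B / INR p) in Hrest
      by (rewrite mult_INR; simpl; field; lra).
    replace (2 * B / INR p) with (B / INR p + B / INR p) by (field; lra). lra.
Qed.

Lemma sum_n_m_morph {G H : AbelianMonoid} (phi : G -> H) :
  phi zero = zero -> (forall x y, phi (plus x y) = plus (phi x) (phi y)) ->
  forall (a : nat -> G) (n m : nat),
  phi (sum_n_m a n m) = sum_n_m (fun k => phi (a k)) n m.
Proof.
  intros H0 Hplus a n m. destruct (le_lt_dec n m) as [Hnm|Hnm].
  - replace m with (n + (m - n))%nat by lia. induction (m - n)%nat as [|d IH].
    + now rewrite Nat.add_0_r, !sum_n_n.
    + rewrite Nat.add_succ_r, !sum_n_Sm by lia. now rewrite Hplus, IH.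
  - now rewrite !sum_n_m_zero.
Qed.

Lemma sum_n_m_minus {G : AbelianGroup} (a b : nat -> G) (n m : nat) :
  sum_n_m (fun k => minus (a k) (b k)) n m = minus (sum_n_m a n m) (sum_n_m b n m).
Proof.
  unfold minus. rewrite sum_n_m_plus. f_equal. symmetry.
  apply sum_n_m_morph; [apply opp_zero | apply opp_plus].
Qed.

Lemma Re_sum_n_m (a : nat -> C) (n m : nat) :
  Re (sum_n_m a n m) = sum_n_m (fun k => Re (a k)) n m.
Proof. now apply (sum_n_m_morph (G := C_AbelianMonoid) (H := R_AbelianMonoid)). Qed.

Lemma Im_sum_n_m (a : nat -> C) (n m : nat) :
  Im (sum_n_m a n m) = sum_n_m (fun k => Im (a k)) n m.
Proof. now apply (sum_n_m_morph (G := C_AbelianMonoid) (H := R_AbelianMonoid)). Qed.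

Lemma Cmod_minus_sym (a b : C) : Cmod (a - b) = Cmod (b - a).
Proof. rewrite <- Cmod_opp. f_equal. ring. Qed.

Lemma Rabs_Im_le_Cmod (z : C) : Rabs (Im z) <= Cmod z.
Proof. eapply Rle_trans; [apply Rmax_r | apply Rmax_Cmod]. Qed.

Lemma Cmod_le_Re_Im (z : C) : Cmod z <= Rabs (Re z) + Rabs (Im z).
Proof.
  replace z with (Re z + Ci * Im z)%C at 1
    by (destruct z; apply injective_projections; simpl; ring).
  eapply Rle_trans; [apply Cmod_triangle|].
  rewrite Cmod_mult, Cmod_Ci, !Cmod_R. lra.
Qed.

Lemma Cmod_le_telescope (z : nat -> C) (m n : nat) : (m <= n)%nat ->
  Cmod (z (S n)) <= Cmod (z m) + sum_n_m (fun k => Cmod (z k - z (S k))%C) m n.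
Proof.
  assert (Hstep : forall a b : C, Cmod b <= Cmod a + Cmod (a - b)).
  { intros a b. replace b with (a + - (a - b))%C at 1 by ring.
    rewrite <- (Cmod_opp (a - b)). apply Cmod_triangle. }
  intros Hmn. replace n with (m + (n - m))%nat by lia.
  induction (n - m)%nat as [|d IH].
  - rewrite Nat.add_0_r, sum_n_n. apply Hstep.
  - rewrite Nat.add_succ_r, sum_n_Sm by lia. change plus with Rplus.
    generalize (Hstep (z (S (m + d))) (z (S (S (m + d))))). lra.
Qed.

Lemma Cmod_cis (t : R) : Cmod (cis t) = 1.
Proof.
  unfold Cmod, cis; simpl fst; simpl snd.
  rewrite <- sqrt_1, <- (sin2_cos2 t). f_equal. unfold Rsqr. ring.
Qed.

Lemma Rabs_sin_INR_mult_le (n : nat) (y : R) :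
  Rabs (sin (INR n * y)) <= INR n * Rabs (sin y).
Proof.
  induction n as [|n IH].
  - rewrite Rmult_0_l, sin_0, Rabs_R0. simpl. lra.
  - rewrite S_INR, Rmult_plus_distr_r, Rmult_1_l, sin_plus.
    eapply Rle_trans; [apply Rabs_triang|]. rewrite !Rabs_mult.
    assert (Rabs (cos y) <= 1) by (apply Rabs_le; apply COS_bound).
    assert (Rabs (cos (INR n * y)) <= 1) by (apply Rabs_le; apply COS_bound).
    generalize (Rabs_pos (sin (INR n * y))) (Rabs_pos (sin y)). nra.
Qed.

(** * Sums of sines *)

(* Telescoping against [2 sin (x/2) sin (j x) = cos ((j - 1/2) x) - cos ((j + 1/2) x)]. *)
Lemma sum_sin_closed_form (x : R) (p q : nat) : (p <= q)%nat ->
  2 * sin (x / 2) * sum_n_m (fun j => sin (INR j * x)) p q =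
  cos ((INR p - / 2) * x) - cos ((INR q + / 2) * x).
Proof.
  intros Hpq. replace q with (p + (q - p))%nat by lia.
  induction (q - p)%nat as [|d IH].
  - rewrite Nat.add_0_r, sum_n_n.
    replace ((INR p - / 2) * x) with (INR p * x - x / 2) by field.
    replace ((INR p + / 2) * x) with (INR p * x + x / 2) by field.
    rewrite cos_minus, cos_plus. ring.
  - rewrite Nat.add_succ_r, sum_n_Sm by lia. change plus with Rplus.
    rewrite Rmult_plus_distr_l, IH.
    replace ((INR (p + d) + / 2) * x) with (INR (S (p + d)) * x - x / 2)
      by (rewrite S_INR; field).
    replace ((INR (S (p + d)) + / 2) * x) with (INR (S (p + d)) * x + x / 2) by field.
    rewrite cos_minus, cos_plus. ring.
Qed.

Lemma Rabs_sum_sin_le (x : R) (p q : nat) : 0 < Rabs (sin (x / 2)) ->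
  Rabs (sum_n_m (fun j => sin (INR j * x)) p q) <= / Rabs (sin (x / 2)).
Proof.
  intros Hs. destruct (le_lt_dec p q) as [Hpq|Hpq].
  - apply Rmult_le_reg_l with (2 * Rabs (sin (x / 2))); [lra|].
    replace (2 * Rabs (sin (x / 2)) * / Rabs (sin (x / 2))) with 2 by (field; lra).
    replace (2 * Rabs (sin (x / 2))) with (Rabs (2 * sin (x / 2)))
      by (rewrite Rabs_mult, Rabs_pos_eq; lra).
    rewrite <- Rabs_mult, sum_sin_closed_form by exact Hpq.
    generalize (COS_bound ((INR p - / 2) * x)) (COS_bound ((INR q + / 2) * x)).
    intros. apply Rabs_le. lra.
  - rewrite sum_n_m_zero by lia. change (Rabs 0 <= / Rabs (sin (x / 2))).
    rewrite Rabs_R0. left. now apply Rinv_0_lt_compat.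
Qed.

Lemma sum_n_m_by_parts (u w : nat -> R) (p q : nat) : (p <= q)%nat ->
  sum_n_m (fun k => u k * w k) p q =
  u (S q) * sum_n_m w p q + sum_n_m (fun k => (u k - u (S k)) * sum_n_m w p k) p q.
Proof.
  intros Hpq. replace q with (p + (q - p))%nat by lia.
  induction (q - p)%nat as [|d IH].
  - rewrite Nat.add_0_r, !sum_n_n. ring_R.
  - rewrite Nat.add_succ_r, !sum_n_Sm, IH by lia. ring_R.
Qed.

Lemma Rabs_sum_mul_sin_le (u : nat -> R) (x : R) (p q : nat) :
  (p <= q)%nat -> 0 < Rabs (sin (x / 2)) ->
  Rabs (sum_n_m (fun k => u k * sin (INR k * x)) p q) <=
  / Rabs (sin (x / 2)) * (Rabs (u (S q)) + sum_n_m (fun k => Rabs (u k - u (S k))) p q).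
Proof.
  intros Hpq Hs. rewrite sum_n_m_by_parts by exact Hpq.
  set (B := / Rabs (sin (x / 2))).
  assert (HB : forall k, Rabs (sum_n_m (fun j => sin (INR j * x)) p k) <= B)
    by (intros k; now apply Rabs_sum_sin_le).
  eapply Rle_trans; [apply Rabs_triang|].
  rewrite Rmult_plus_distr_l, Rabs_mult. apply Rplus_le_compat.
  - rewrite Rmult_comm. apply Rmult_le_compat_r; [apply Rabs_pos | apply HB].
  - eapply Rle_trans; [apply (norm_sum_n_m (V := R_NormedModule))|].
    rewrite <- (sum_n_m_mult_l (K := R_Ring)). apply sum_n_m_le. intros k.
    change (Rabs ((u k - u (S k)) * sum_n_m (fun j => sin (INR j * x)) p k)
            <= B * Rabs (u k - u (S k))).
    rewrite Rabs_mult, Rmult_comm. apply Rmult_le_compat_r; [apply Rabs_pos | apply HB].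
Qed.

Lemma INR_threshold (s : R) (m : nat) :
  INR m * s <= 1 \/ exists t, (t < m)%nat /\ INR t * s <= 1 < INR (S t) * s.
Proof.
  induction m as [|m [Hm | [t [Htm Ht]]]].
  - left. simpl. lra.
  - destruct (Rle_lt_dec (INR (S m) * s) 1) as [Hle|Hgt]; [left; exact Hle|].
    right. exists m. split; [lia | split; assumption].
  - right. exists t. split; [lia | exact Ht].
Qed.

Section SineSeriesTail.
Variables (u : nat -> R) (P : nat) (eps V : R).
Hypothesis HP : (1 <= P)%nat.
Hypothesis Heps : 0 <= eps.
Hypothesis HV : 0 <= V.
Hypothesis Hu : forall k, (P <= k)%nat -> INR k * Rabs (u k) <= eps.
Hypothesis Hdu : forall p q, (P <= p)%nat ->
  sum_n_m (fun k => Rabs (u k - u (S k))) p q <= V * eps / INR p.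

Lemma Rabs_sum_mul_sin_low x n t : (P <= S n)%nat ->
  INR t * Rabs (sin (x / 2)) <= 1 ->
  Rabs (sum_n_m (fun k => u k * sin (INR k * x)) (S n) t) <= 2 * eps.
Proof.
  intros Hn Ht. set (s := Rabs (sin (x / 2))) in *.
  assert (Hs : 0 <= s) by apply Rabs_pos.
  destruct (le_lt_dec (S n) t) as [Hnt|Hnt].
  2:{ rewrite sum_n_m_zero by lia. change (Rabs 0 <= 2 * eps). rewrite Rabs_R0. lra. }
  eapply Rle_trans; [apply (norm_sum_n_m (V := R_NormedModule))|].
  apply Rle_trans with (sum_n_m (fun _ => 2 * eps * s) (S n) t).
  - apply sum_n_m_le_loc. intros k Hk. change (Rabs (u k * sin (INR k * x)) <= 2 * eps * s).
    assert (Hsin : Rabs (sin (INR k * x)) <= 2 * INR k * s).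
    { replace (INR k * x) with (INR (2 * k) * (x / 2)) by (rewrite mult_INR; simpl; field).
      replace (2 * INR k) with (INR (2 * k)) by (rewrite mult_INR; simpl; ring).
      apply Rabs_sin_INR_mult_le. }
    generalize (Hu k ltac:(lia)) (Rabs_pos (u k)) (Rabs_pos (sin (INR k * x))).
    rewrite Rabs_mult. nra.
  - rewrite sum_n_m_const.
    assert (INR (S t - S n) <= INR t) by (apply le_INR; lia).
    assert (0 <= (INR t - INR (S t - S n)) * (2 * eps * s)) by (apply Rmult_le_pos; nra).
    assert (0 <= eps * (1 - INR t * s)) by (apply Rmult_le_pos; lra).
    nra.
Qed.

Lemma Rabs_sum_mul_sin_high x p m : (P <= p)%nat -> 1 < INR p * Rabs (sin (x / 2)) ->
  Rabs (sum_n_m (fun k => u k * sin (INR k * x)) p m) <= (1 + V) * eps.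
Proof.
  intros Hp Hps. set (s := Rabs (sin (x / 2))) in *.
  assert (Hp0 : 0 < INR p) by (apply lt_0_INR; lia).
  assert (Hs : 0 < s)
    by (apply Rabs_pos_lt; intros E; unfold s in Hps; rewrite E, Rabs_R0 in Hps; lra).
  destruct (le_lt_dec p m) as [Hpm|Hpm].
  2:{ rewrite sum_n_m_zero by lia. change (Rabs 0 <= (1 + V) * eps). rewrite Rabs_R0. nra. }
  eapply Rle_trans; [now apply Rabs_sum_mul_sin_le|]. fold s.
  assert (Hlast : Rabs (u (S m)) <= eps / INR p).
  { assert (Hm0 : INR p <= INR (S m)) by (apply le_INR; lia).
    generalize (Hu (S m) ltac:(lia)) (Rabs_pos (u (S m))). intros.
    apply Rmult_le_reg_l with (INR p); [exact Hp0|].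
    replace (INR p * (eps / INR p)) with eps by (field; lra). nra. }
  generalize (Hdu p m Hp). intros Hv.
  apply Rle_trans with (/ s * ((1 + V) * eps / INR p)).
  - apply Rmult_le_compat_l; [left; now apply Rinv_0_lt_compat|].
    replace ((1 + V) * eps / INR p) with (eps / INR p + V * eps / INR p) by (field; lra). lra.
  - replace (/ s * ((1 + V) * eps / INR p)) with ((1 + V) * eps * / (INR p * s)) by (field; lra).
    rewrite <- (Rmult_1_r ((1 + V) * eps)) at 2.
    apply Rmult_le_compat_l; [nra|]. rewrite <- Rinv_1. apply Rinv_le_contravar; lra.
Qed.

Lemma Rabs_sum_mul_sin_tail x n m : (P <= n)%nat ->
  Rabs (sum_n_m (fun k => u k * sin (INR k * x)) (S n) m) <= (3 + V) * eps.
Proof.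
  intros Hn. set (s := Rabs (sin (x / 2))).
  assert (Hs : 0 <= s) by apply Rabs_pos.
  destruct (INR_threshold s m) as [Hm | [t [Htm [Ht1 Ht2]]]].
  - eapply Rle_trans; [apply Rabs_sum_mul_sin_low; [lia | exact Hm]|]. nra.
  - destruct (le_lt_dec t n) as [Htn|Htn].
    + eapply Rle_trans; [apply Rabs_sum_mul_sin_high; [lia|]|]; [|nra].
      apply Rlt_le_trans with (INR (S t) * s); [exact Ht2|].
      apply Rmult_le_compat_r; [exact Hs | apply le_INR; lia].
    + rewrite (sum_n_m_Chasles _ (S n) t m) by lia. change plus with Rplus.
      eapply Rle_trans; [apply Rabs_triang|].
      generalize (Rabs_sum_mul_sin_low x n t ltac:(lia) Ht1)
                 (Rabs_sum_mul_sin_high x (S t) m ltac:(lia) Ht2). lra.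
Qed.

End SineSeriesTail.

(** * Uniform limits *)

Definition uniformly_cauchy (u : nat -> R -> C) : Prop :=
  forall eps, 0 < eps -> exists N, forall n m, (N <= n)%nat -> (N <= m)%nat ->
    forall x, Cmod (u m x - u n x) <= eps.

Definition converges_uniformly (u : nat -> R -> C) (f : R -> C) : Prop :=
  forall eps, 0 < eps -> exists N, forall n, (N <= n)%nat ->
    forall x, Cmod (f x - u n x) <= eps.

Section UniformLimits.
Variable u : nat -> R -> C.

Lemma uniformly_cauchy_of_converges_uniformly (f : R -> C) :
  converges_uniformly u f -> uniformly_cauchy u.
Proof.
  intros Hf eps Heps. destruct (Hf (eps / 2)) as [N HN]; [lra|].
  exists N. intros n m Hn Hm x.
  replace (u m x - u n x)%C with ((f x - u n x) + - (f x - u m x))%C by ring.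
  eapply Rle_trans; [apply Cmod_triangle|]. rewrite Cmod_opp.
  generalize (HN n Hn x) (HN m Hm x). lra.
Qed.

Lemma filterlim_fct_of_converges_uniformly (f : R -> C) :
  converges_uniformly u f ->
  filterlim u eventually (locally (f : fct_UniformSpace R C_UniformSpace)).
Proof.
  intros Hf. apply filterlim_locally. intros eps.
  destruct (Hf (eps / 2)) as [N HN]; [apply is_pos_div_2|].
  exists N. intros n Hn x. apply (norm_compat1 (V := C_NormedModule)).
  change (Cmod (u n x - f x) < eps). rewrite Cmod_minus_sym.
  generalize (HN n Hn x) (cond_pos eps). lra.
Qed.

Lemma converges_uniformly_of_filterlim_fct (f : R -> C) :
  filterlim u eventually (locally (f : fct_UniformSpace R C_UniformSpace)) ->
  converges_uniformly u f.
Proof.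
  intros Hf eps Heps.
  assert (Hk := @norm_factor_gt_0 _ C_NormedModule).
  set (k := @norm_factor _ C_NormedModule) in Hk.
  destruct (proj1 (filterlim_locally _ _) Hf (mkposreal _ (Rdiv_lt_0_compat _ _ Heps Hk)))
    as [N HN].
  exists N. intros n Hn x.
  generalize (norm_compat2 (V := C_NormedModule) _ _ _ (HN n Hn x)). simpl.
  change (Cmod (u n x - f x) < k * (eps / k) -> Cmod (f x - u n x) <= eps).
  rewrite Cmod_minus_sym. replace (k * (eps / k)) with eps by (field; lra).
  lra.
Qed.

Lemma uniformly_cauchy_converges_uniformly :
  uniformly_cauchy u -> exists f, converges_uniformly u f.
Proof.
  intros HS.
  destruct (proj1 (filterlim_locally_cauchy
                     (U := fct_CompleteSpace (T := R) (U := C_CompleteNormedModule))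
                     (F := eventually) u)) as [f Hf].
  - intros eps. destruct (HS (eps / 2)) as [N HN]; [apply is_pos_div_2|].
    exists (fun n => (N <= n)%nat). split; [now exists N|].
    intros n m Hn Hm x. apply (norm_compat1 (V := C_NormedModule)).
    change (Cmod (u m x - u n x) < eps).
    generalize (HN n m Hn Hm x) (cond_pos eps). lra.
  - exists f. now apply converges_uniformly_of_filterlim_fct.
Qed.

Lemma converges_uniformly_pointwise (f : R -> C) (x : R) :
  converges_uniformly u f -> filterlim (fun n => u n x) eventually (locally (f x)).
Proof.
  intros Hf. apply filterlim_locally. intros eps.
  apply (filter_imp (fun n => fct_ball R C_UniformSpace f eps (u n))); [now intros n Hn|].
  exact (proj1 (filterlim_locally _ _) (filterlim_fct_of_converges_uniformly f Hf) eps).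
Qed.

Lemma converges_uniformly_continuous (f : R -> C) (x : R) :
  (forall n, continuous (u n) x) -> converges_uniformly u f -> continuous f x.
Proof.
  intros HS Hf.
  apply (filterlim_switch_1 (U := C_UniformSpace) eventually _ (locally x) _
           u f (fun n => u n x)).
  - now apply filterlim_fct_of_converges_uniformly.
  - exact HS.
  - now apply converges_uniformly_pointwise.
Qed.

Lemma converges_uniformly_periodic (f : R -> C) (T : R) :
  (forall n x, u n (x + T) = u n x) -> converges_uniformly u f ->
  forall x, f (x + T) = f x.
Proof.
  intros HS Hf x.
  (* The filter instance is given explicitly: inferring it diverges. *)
  apply (filterlim_locally_unique (V := C_NormedModule)
           (FF := Proper_StrongProper _ eventually_filter) (fun n => u n x)).
  - apply (filterlim_ext (fun n => u n (x + T))); [intros n; apply HS|].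
    now apply converges_uniformly_pointwise.
  - now apply converges_uniformly_pointwise.
Qed.

Lemma uniformly_cauchy_of_ordered :
  (forall eps, 0 < eps -> exists N, forall n m, (N <= n)%nat -> (n <= m)%nat ->
     forall x, Cmod (u m x - u n x) <= eps) ->
  uniformly_cauchy u.
Proof.
  intros HS eps Heps. destruct (HS eps Heps) as [N HN].
  exists N. intros n m Hn Hm x. destruct (le_lt_dec n m) as [Hnm|Hmn].
  - now apply HN.
  - rewrite Cmod_minus_sym. apply HN; lia.
Qed.

End UniformLimits.

(** * Fourier partial sums *)

Definition pair_term (c : Z -> C) (k : nat) (x : R) : C :=
  (c (Z.of_nat k) * cis (INR k * x) + c (- Z.of_nat k)%Z * cis (- (INR k * x)))%C.

Definition coef_plus (c : Z -> C) (k : nat) : C := (c (Z.of_nat k) + c (- Z.of_nat k)%Z)%C.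
Definition coef_minus (c : Z -> C) (k : nat) : C := (c (Z.of_nat k) - c (- Z.of_nat k)%Z)%C.

Lemma Spart_O (c : Z -> C) (x : R) : Spart c 0 x = c 0%Z.
Proof.
  unfold Spart. rewrite sum_O. simpl. unfold cis.
  rewrite Rmult_0_l, cos_0, sin_0. apply injective_projections; simpl; ring.
Qed.

Lemma Spart_S (c : Z -> C) (n : nat) (x : R) :
  Spart c (S n) x = (Spart c n x + pair_term c (S n) x)%C.
Proof.
  unfold Spart, sum_n.
  replace (2 * S n)%nat with (S (S (2 * n))) by lia.
  rewrite sum_n_Sm, sum_Sn_m, <- sum_n_m_S by lia.
  rewrite (sum_n_m_ext _ (fun j : nat =>
       let k := (Z.of_nat j - Z.of_nat n)%Z in (c k * cis (IZR k * x))%C)).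
  2:{ intros j. cbv zeta.
       now replace (Z.of_nat (S j) - Z.of_nat (S n))%Z with (Z.of_nat j - Z.of_nat n)%Z by lia. }
  replace (Z.of_nat 0 - Z.of_nat (S n))%Z with (- Z.of_nat (S n))%Z by lia.
  replace (Z.of_nat (S (S (2 * n))) - Z.of_nat (S n))%Z with (Z.of_nat (S n)) by lia.
  rewrite opp_IZR, <- INR_IZR_INZ, Ropp_mult_distr_l_reverse.
  unfold pair_term. change plus with Cplus. ring.
Qed.

Lemma Spart_sub (c : Z -> C) (x : R) (n m : nat) : (n <= m)%nat ->
  (Spart c m x - Spart c n x)%C = sum_n_m (fun k => pair_term c k x) (S n) m.
Proof.
  intros Hnm. replace m with (n + (m - n))%nat by lia.
  induction (m - n)%nat as [|d IH].
  - rewrite Nat.add_0_r, sum_n_m_zero by lia. change (Spart c n x - Spart c n x = 0)%C. ring.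
  - rewrite Nat.add_succ_r, sum_n_Sm, <- IH, Spart_S by lia.
    change plus with Cplus. ring.
Qed.

Lemma continuous_cis_comp (g : R -> R) (x : R) :
  continuous g x -> continuous (fun y => cis (g y)) x.
Proof.
  intros Hg. apply filterlim_locally. intros eps.
  generalize (proj1 (filterlim_locally _ _) (continuous_cos_comp g x Hg) eps)
             (proj1 (filterlim_locally _ _) (continuous_sin_comp g x Hg) eps).
  intros H1 H2. eapply filter_imp; [|exact (filter_and _ _ H1 H2)].
  intros y [Hc Hs]. split; assumption.
Qed.

Lemma continuous_Spart (c : Z -> C) (n : nat) (x : R) : continuous (Spart c n) x.
Proof.
  assert (Hlin : forall a : R, continuous (fun y : R => a * y) x).
  { intros a. apply (continuous_scal_r (V := R_NormedModule)). apply continuous_id. }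
  induction n as [|n IH].
  - apply (continuous_ext (fun _ => c 0%Z)); [intros; symmetry; apply Spart_O|].
    apply continuous_const.
  - apply (continuous_ext (fun y => Spart c n y + pair_term c (S n) y)%C);
      [intros; symmetry; apply Spart_S|].
    apply (continuous_plus (V := C_NormedModule)); [exact IH|].
    apply (continuous_plus (V := C_NormedModule));
      apply (continuous_scal_r (V := C_NormedModule)); apply continuous_cis_comp.
    + apply Hlin.
    + apply (continuous_ext (fun y => - INR (S n) * y)); [intros; ring_R | apply Hlin].
Qed.

Lemma Spart_periodic (c : Z -> C) (n : nat) (x : R) : Spart c n (x + 2 * PI) = Spart c n x.
Proof.
  induction n as [|n IH]; [now rewrite !Spart_O|].
  rewrite !Spart_S, IH. f_equal. unfold pair_term, cis.
  replace (INR (S n) * (x + 2 * PI)) with (INR (S n) * x + 2 * INR (S n) * PI) by ring.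
  rewrite !cos_neg, !sin_neg, cos_period, sin_period. reflexivity.
Qed.

Lemma pair_term_decomp (c : Z -> C) (k : nat) (x : R) :
  pair_term c k x =
  (coef_plus c k * cis (- (INR k * x)) + 2 * Ci * sin (INR k * x) * c (Z.of_nat k))%C.
Proof.
  unfold pair_term, coef_plus.
  replace (cis (INR k * x)) with (cis (- (INR k * x)) + 2 * Ci * sin (INR k * x))%C; [ring|].
  unfold cis. rewrite cos_neg, sin_neg. apply injective_projections; simpl; ring.
Qed.

Lemma pair_term_at_0 (c : Z -> C) (k : nat) : pair_term c k 0 = coef_plus c k.
Proof.
  unfold pair_term, coef_plus, cis.
  rewrite Rmult_0_r, Ropp_0, cos_0, sin_0. apply injective_projections; simpl; ring.
Qed.

Lemma Im_pair_term_odd (c : Z -> C) (k : nat) (x : R) :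
  Im (pair_term c k x - pair_term c k (- x))%C = 2 * sin (INR k * x) * Re (coef_minus c k).
Proof.
  unfold pair_term, coef_minus, cis. replace (INR k * - x) with (- (INR k * x)) by ring.
  rewrite !cos_neg, !sin_neg, Ropp_involutive. simpl. ring.
Qed.

(** * Sufficiency *)

Lemma Cmod_sum_pair_term_le (c : Z -> C) (x : R) (n m : nat) :
  Cmod (sum_n_m (fun k => pair_term c k x) n m) <=
  sum_n_m (fun k => Cmod (coef_plus c k)) n m
  + 2 * (Rabs (sum_n_m (fun k => Re (c (Z.of_nat k)) * sin (INR k * x)) n m)
         + Rabs (sum_n_m (fun k => Im (c (Z.of_nat k)) * sin (INR k * x)) n m)).
Proof.
  rewrite (sum_n_m_ext _ _ _ _ (fun k => pair_term_decomp c k x)).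
  rewrite (sum_n_m_plus (G := C_AbelianMonoid)).
  eapply Rle_trans; [apply Cmod_triangle|]. apply Rplus_le_compat.
  - eapply Rle_trans; [apply (norm_sum_n_m (V := C_NormedModule))|].
    apply sum_n_m_le. intros k.
    change (Cmod (coef_plus c k * cis (- (INR k * x))) <= Cmod (coef_plus c k)).
    rewrite Cmod_mult, Cmod_cis. lra.
  - rewrite (sum_n_m_ext _ (fun k => mult (2 * Ci)%C (sin (INR k * x) * c (Z.of_nat k))%C))
      by (intros k; change ((2 * Ci * sin (INR k * x) * c (Z.of_nat k))%C
                            = (2 * Ci * (sin (INR k * x) * c (Z.of_nat k)))%C); ring).
    rewrite (sum_n_m_mult_l (K := C_Ring)). change mult with Cmult.
    rewrite Cmod_mult, Cmod_mult, Cmod_Ci, Cmod_R, Rabs_pos_eq, Rmult_1_r by lra.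
    apply Rmult_le_compat_l; [lra|].
    eapply Rle_trans; [apply Cmod_le_Re_Im|].
    rewrite Re_sum_n_m, Im_sum_n_m. apply Rplus_le_compat; right; f_equal;
      apply sum_n_m_ext; intros k; unfold Re, Im; simpl; ring.
Qed.

Lemma var_block_eq (c : Z -> C) (m : nat) :
  var_block c m = sum_n_m (fun k => Cmod (c (Z.of_nat k) - c (Z.of_nat (S k)))%C) m (2 * m).
Proof.
  unfold var_block. apply sum_n_m_ext. intros k. now rewrite Nat2Z.inj_succ.
Qed.

Section Sufficiency.
Variables (c : Z -> C) (N0 : nat) (M : R).
Hypothesis HM : 0 <= M.
Hypothesis Hvar : forall m : nat, (1 <= m)%nat -> var_block c m <= M * max_block c N0 m.

Section SmallCoefficients.
Variables (P : nat) (eps : R).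
Hypothesis HP : (1 <= P)%nat.
Hypothesis Heps : 0 <= eps.
Hypothesis Hc : forall k, (P <= k)%nat -> INR k * Cmod (c (Z.of_nat k)) <= eps.

Lemma max_block_le m : (P <= m)%nat -> max_block c N0 m <= eps / INR m.
Proof.
  intros Hm. assert (Hm0 : 0 < INR m) by (apply lt_0_INR; lia).
  apply fold_right_Rmax_map_le; [now apply Rdiv_le_0_compat|].
  intros k Hk. apply in_seq in Hk.
  assert (Hk0 : INR m <= INR k) by (apply le_INR; lia).
  generalize (Hc k ltac:(lia)) (Cmod_ge_0 (c (Z.of_nat k))). intros.
  apply Rmult_le_reg_l with (INR m); [exact Hm0|].
  replace (INR m * (eps / INR m)) with eps by (field; lra). nra.
Qed.

Lemma variation_tail_le p q : (P <= p)%nat ->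
  sum_n_m (fun k => Cmod (c (Z.of_nat k) - c (Z.of_nat (S k)))%C) p q <= 2 * (M * eps) / INR p.
Proof.
  apply sum_n_m_le_of_dyadic_blocks; [exact HP | intros; apply Cmod_ge_0|].
  intros m Hm. rewrite <- var_block_eq.
  eapply Rle_trans; [apply Hvar; lia|]. unfold Rdiv. rewrite Rmult_assoc.
  apply Rmult_le_compat_l; [lra | now apply max_block_le].
Qed.

Lemma Rabs_sum_coef_sin_tail (u : nat -> R) x n m : (P <= n)%nat ->
  (forall k, Rabs (u k) <= Cmod (c (Z.of_nat k))) ->
  (forall k, Rabs (u k - u (S k)) <= Cmod (c (Z.of_nat k) - c (Z.of_nat (S k)))%C) ->
  Rabs (sum_n_m (fun k => u k * sin (INR k * x)) (S n) m) <= (3 + 2 * M) * eps.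
Proof.
  intros Hn Hu Hdu. apply (Rabs_sum_mul_sin_tail u P eps (2 * M)); auto; try lra.
  - intros k Hk. eapply Rle_trans; [|apply (Hc k Hk)].
    apply Rmult_le_compat_l; [apply pos_INR | apply Hu].
  - intros p q Hp. eapply Rle_trans; [apply sum_n_m_le; apply Hdu|].
    rewrite Rmult_assoc. now apply variation_tail_le.
Qed.

End SmallCoefficients.

Lemma Spart_uniformly_cauchy :
  is_lim_seq (fun n : nat => INR n * Cmod (c (Z.of_nat n))) 0 ->
  ex_series (fun n : nat => Cmod (coef_plus c (S n))) ->
  uniformly_cauchy (Spart c).
Proof.
  intros Hlim Hser. apply uniformly_cauchy_of_ordered. intros eps Heps.
  set (e1 := eps / (8 * (3 + 2 * M))).
  assert (He1 : 0 < e1) by (unfold e1; apply Rdiv_lt_0_compat; lra).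
  apply is_lim_seq_spec in Hlim. destruct (Hlim (mkposreal e1 He1)) as [P0 HP0].
  apply (Cauchy_ex_series (V := R_CompleteNormedModule)) in Hser.
  destruct (Hser (mkposreal (eps / 2) ltac:(lra))) as [N1 HN1].
  set (P := Nat.max P0 1).
  assert (Hc : forall k, (P <= k)%nat -> INR k * Cmod (c (Z.of_nat k)) <= e1).
  { intros k Hk. specialize (HP0 k ltac:(lia)). simpl in HP0.
    rewrite Rminus_0_r in HP0. apply Rabs_lt_between in HP0. lra. }
  exists (Nat.max P N1). intros n m Hn Hm x.
  rewrite Spart_sub by exact Hm.
  eapply Rle_trans; [apply Cmod_sum_pair_term_le|].
  assert (Hplus : sum_n_m (fun k => Cmod (coef_plus c k)) (S n) m <= eps / 2).
  { destruct (Nat.eq_dec n m) as [->|Hnm].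
    { rewrite sum_n_m_zero by lia. change (0 <= eps / 2). lra. }
    destruct m as [|m]; [lia|].
    rewrite <- sum_n_m_S. eapply Rle_trans; [apply Rle_abs|].
    left. apply (HN1 n m); lia. }
  assert (Hre := Rabs_sum_coef_sin_tail P e1 ltac:(lia) ltac:(lra) Hc
                   (fun k => Re (c (Z.of_nat k))) x n m ltac:(lia)
                   (fun k => re_le_Cmod _)
                   (fun k => re_le_Cmod (c (Z.of_nat k) - c (Z.of_nat (S k))))).
  assert (Him := Rabs_sum_coef_sin_tail P e1 ltac:(lia) ltac:(lra) Hc
                   (fun k => Im (c (Z.of_nat k))) x n m ltac:(lia)
                   (fun k => Rabs_Im_le_Cmod _)
                   (fun k => Rabs_Im_le_Cmod (c (Z.of_nat k) - c (Z.of_nat (S k))))).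
  assert (E : 4 * ((3 + 2 * M) * e1) = eps / 2) by (unfold e1; field; lra).
  lra.
Qed.

End Sufficiency.

(** * Necessity *)

Lemma cos_mul_Cmod_le_Re (theta : R) (z : C) :
  0 <= theta <= PI -> Ksector theta z -> cos theta * Cmod z <= Re z.
Proof.
  intros Htheta [-> | [t [Ht [Ez Htabs]]]].
  - rewrite Cmod_0. simpl. lra.
  - replace (Re z) with (Cmod z * cos t) by (symmetry; exact (f_equal fst Ez)).
    rewrite Rmult_comm. apply Rmult_le_compat_l; [apply Cmod_ge_0|].
    assert (Hcos : cos t = cos (Rabs t))
      by (destruct (Rle_dec 0 t); [rewrite Rabs_right | rewrite Rabs_left, cos_neg]; lra).
    rewrite Hcos. apply cos_decr_1; try lra. apply Rabs_pos.
Qed.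

Lemma half_le_sin_dyadic (p k : nat) : (1 <= p)%nat -> (S p <= k <= 2 * p)%nat ->
  / 2 <= sin (INR k * (PI / (4 * INR p))).
Proof.
  intros Hp Hk. assert (Hp0 : 0 < INR p) by (apply lt_0_INR; lia).
  assert (Hlo : INR (S p) <= INR k) by (apply le_INR; lia).
  assert (Hhi : INR k <= INR (2 * p)) by (apply le_INR; lia).
  rewrite S_INR in Hlo. rewrite mult_INR in Hhi. simpl (INR 2) in Hhi.
  assert (HPI := PI_RGT_0).
  assert (H1 : PI / 4 <= INR k * (PI / (4 * INR p))).
  { apply Rmult_le_reg_r with (4 * INR p / PI); [apply Rdiv_lt_0_compat; lra|].
    field_simplify; lra. }
  assert (H2 : INR k * (PI / (4 * INR p)) <= PI / 2).
  { apply Rmult_le_reg_r with (4 * INR p / PI); [apply Rdiv_lt_0_compat; lra|].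
    field_simplify; lra. }
  apply Rle_trans with (sin (PI / 4)); [|apply sin_incr_1; lra].
  rewrite sin_PI4.
  assert (Hsqrt : sqrt 2 <= 2).
  { rewrite <- (sqrt_square 2) at 2 by lra. apply sqrt_le_1_alt. lra. }
  assert (0 < sqrt 2) by (apply sqrt_lt_R0; lra).
  apply Rmult_le_reg_l with (2 * sqrt 2); [lra|]. field_simplify; lra.
Qed.

Lemma Cmod_le_coef_plus_minus (c : Z -> C) (k : nat) :
  Cmod (c (Z.of_nat k)) <= (Cmod (coef_plus c k) + Cmod (coef_minus c k)) / 2.
Proof.
  assert (E : (2 * c (Z.of_nat k))%C = (coef_plus c k + coef_minus c k)%C)
    by (unfold coef_plus, coef_minus; ring).
  generalize (Cmod_triangle (coef_plus c k) (coef_minus c k)).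
  rewrite <- E, Cmod_mult, Cmod_R, Rabs_pos_eq by lra. lra.
Qed.

Section Necessity.
Variables (c : Z -> C) (theta0 : R).
Hypothesis Htheta : 0 <= theta0 < PI / 2.
Hypothesis Hsect : forall n : nat, (1 <= n)%nat ->
  Ksector theta0 (coef_plus c n) /\ Ksector theta0 (coef_minus c n).

Lemma cos_theta0_pos : 0 < cos theta0.
Proof. apply cos_gt_0; lra. Qed.

Lemma sum_Cmod_coef_plus_le n m : (n <= m)%nat ->
  cos theta0 * sum_n_m (fun k => Cmod (coef_plus c k)) (S n) m
  <= Cmod (Spart c m 0 - Spart c n 0).
Proof.
  intros Hnm. rewrite <- (sum_n_m_mult_l (K := R_Ring)).
  eapply Rle_trans.
  { apply sum_n_m_le_loc. intros k Hk.
    apply (cos_mul_Cmod_le_Re theta0); [lra | apply (Hsect k); lia]. }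
  rewrite Spart_sub by exact Hnm.
  rewrite (sum_n_m_ext (fun k => Re (coef_plus c k)) (fun k => Re (pair_term c k 0)))
    by (intros k; now rewrite pair_term_at_0).
  rewrite <- Re_sum_n_m.
  eapply Rle_trans; [apply Rle_abs | apply re_le_Cmod].
Qed.

Lemma sum_Cmod_coef_minus_le p : (1 <= p)%nat ->
  let x := PI / (4 * INR p) in
  cos theta0 * sum_n_m (fun k => Cmod (coef_minus c k)) (S p) (2 * p)
  <= Cmod (Spart c (2 * p) x - Spart c p x) + Cmod (Spart c (2 * p) (- x) - Spart c p (- x)).
Proof.
  intros Hp x. rewrite !Spart_sub by lia. rewrite <- (sum_n_m_mult_l (K := R_Ring)).
  apply Rle_trans
    with (sum_n_m (fun k => Im (pair_term c k x - pair_term c k (- x))%C) (S p) (2 * p)).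
  - apply sum_n_m_le_loc. intros k Hk. rewrite Im_pair_term_odd.
    assert (Hb := cos_mul_Cmod_le_Re theta0 (coef_minus c k) ltac:(lra)
                    (proj2 (Hsect k ltac:(lia)))).
    assert (Hs := half_le_sin_dyadic p k Hp Hk). fold x in Hs.
    assert (0 <= cos theta0 * Cmod (coef_minus c k))
      by (apply Rmult_le_pos; [left; apply cos_theta0_pos | apply Cmod_ge_0]).
    change (cos theta0 * Cmod (coef_minus c k) <= 2 * sin (INR k * x) * Re (coef_minus c k)).
    nra.
  - rewrite <- Im_sum_n_m.
    rewrite (sum_n_m_minus (G := C_AbelianGroup) (fun k => pair_term c k x)).
    set (A := sum_n_m (fun k => pair_term c k x) (S p) (2 * p)).
    set (B := sum_n_m (fun k => pair_term c k (- x)) (S p) (2 * p)).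
    change (Im A - Im B <= Cmod A + Cmod B).
    generalize (Rabs_Im_le_Cmod A) (Rabs_Im_le_Cmod B). intros HA HB.
    apply Rabs_le_between in HA. apply Rabs_le_between in HB. lra.
Qed.

Hypothesis HU : uniformly_cauchy (Spart c).

Lemma ex_series_coef_plus : ex_series (fun n => Cmod (coef_plus c (S n))).
Proof.
  assert (Hk := cos_theta0_pos).
  apply (ex_series_Cauchy (V := R_CompleteNormedModule)). intros eps.
  destruct (HU (cos theta0 * eps / 2)) as [N HN].
  { generalize (cond_pos eps). intros. apply Rdiv_lt_0_compat; nra. }
  exists N. intros n m Hn Hm. destruct (le_lt_dec n m) as [Hnm|Hmn].
  - rewrite (sum_n_m_S (fun k => Cmod (coef_plus c k))).
    assert (Ha := sum_Cmod_coef_plus_le n (S m) ltac:(lia)).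
    assert (HS := HN n (S m) Hn ltac:(lia) 0).
    assert (Hnn := sum_n_m_nonneg (fun k => Cmod (coef_plus c k)) (S n) (S m)
                     (fun k => Cmod_ge_0 _)).
    assert (Hsum : sum_n_m (fun k => Cmod (coef_plus c k)) (S n) (S m) <= eps / 2)
      by (apply Rmult_le_reg_l with (cos theta0); [exact Hk | lra]).
    change (Rabs (sum_n_m (fun k => Cmod (coef_plus c k)) (S n) (S m)) < eps).
    rewrite Rabs_pos_eq by exact Hnn. generalize (cond_pos eps). lra.
  - rewrite sum_n_m_zero by lia. change (Rabs 0 < eps). rewrite Rabs_R0. apply cond_pos.
Qed.

Lemma block_sum_Cmod_vanishes : forall eps, 0 < eps -> exists N, forall p, (N <= p)%nat ->
  sum_n_m (fun k => Cmod (c (Z.of_nat k))) (S p) (2 * p) <= eps.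
Proof.
  intros eps Heps. assert (Hk := cos_theta0_pos).
  destruct (HU (cos theta0 * eps / 2)) as [N HN]; [apply Rdiv_lt_0_compat; nra|].
  exists (Nat.max N 1). intros p Hp.
  set (x := PI / (4 * INR p)).
  assert (Ha := sum_Cmod_coef_plus_le p (2 * p) ltac:(lia)).
  assert (Hb := sum_Cmod_coef_minus_le p ltac:(lia)). cbv zeta in Hb. fold x in Hb.
  generalize (HN p (2 * p)%nat ltac:(lia) ltac:(lia) 0) (HN p (2 * p)%nat ltac:(lia) ltac:(lia) x)
             (HN p (2 * p)%nat ltac:(lia) ltac:(lia) (- x)). intros E1 E2 E3.
  set (SA := sum_n_m (fun k => Cmod (coef_plus c k)) (S p) (2 * p)) in *.
  set (SB := sum_n_m (fun k => Cmod (coef_minus c k)) (S p) (2 * p)) in *.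
  apply Rle_trans with ((SA + SB) / 2).
  - unfold SA, SB. rewrite <- (sum_n_m_plus (G := R_AbelianMonoid)).
    unfold Rdiv. rewrite Rmult_comm, <- (sum_n_m_mult_l (K := R_Ring)).
    apply sum_n_m_le. intros k. generalize (Cmod_le_coef_plus_minus c k).
    change (Cmod (c (Z.of_nat k)) <= (Cmod (coef_plus c k) + Cmod (coef_minus c k)) / 2 ->
            Cmod (c (Z.of_nat k)) <= / 2 * (Cmod (coef_plus c k) + Cmod (coef_minus c k))).
    lra.
  - assert (SA + SB <= 3 * eps / 2)
      by (apply Rmult_le_reg_l with (cos theta0); [exact Hk | lra]).
    lra.
Qed.

End Necessity.

Section Windows.
Variables (g : nat -> R) (N0 : nat) (K : R).
Hypothesis Hg : forall k, 0 <= g k.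
Hypothesis HN0 : (1 <= N0)%nat.
Hypothesis HK : 0 <= K.
Hypothesis Hwin : forall m n, (1 <= m)%nat -> (m <= n <= 2 * m)%nat ->
  g n <= K * sum_n_m g m (m + N0 - 1).

Lemma mul_le_sum_windows (n a r : nat) : (1 <= a)%nat ->
  (forall i, (i < r)%nat -> (a + i * N0 <= n <= 2 * (a + i * N0))%nat) ->
  INR r * g n <= K * sum_n_m g a (a + r * N0 - 1).
Proof.
  intros Ha. induction r as [|r IH]; intros Hi.
  - simpl. rewrite Rmult_0_l. apply Rmult_le_pos; [exact HK | now apply sum_n_m_nonneg].
  - rewrite S_INR, (sum_n_m_Chasles _ a (a + r * N0 - 1) (a + S r * N0 - 1)) by (simpl; lia).
    change plus with Rplus. rewrite Rmult_plus_distr_l, Rmult_plus_distr_r, Rmult_1_l.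
    apply Rplus_le_compat; [apply IH; intros i Hir; apply Hi; lia|].
    replace (S (a + r * N0 - 1)) with (a + r * N0)%nat by lia.
    replace (a + S r * N0 - 1)%nat with (a + r * N0 + N0 - 1)%nat by (simpl; lia).
    apply Hwin; [lia | apply Hi; lia].
Qed.

(* About [n / (2 N0)] disjoint windows of length [N0] fit into the dyadic block of [n / 2],
   and each of them bounds [g n]. *)
Lemma is_lim_seq_mul_of_windows :
  (forall eps, 0 < eps -> exists N, forall p, (N <= p)%nat -> sum_n_m g (S p) (2 * p) <= eps) ->
  is_lim_seq (fun n => INR n * g n) 0.
Proof.
  intros Hblock. apply is_lim_seq_spec. intros eps.
  assert (HN0r : 1 <= INR N0) by (apply (le_INR 1); lia).
  set (L := 6 * INR N0 * (1 + K)).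
  assert (HL : 0 < L) by (unfold L; nra).
  destruct (Hblock (eps / L)) as [N HN]; [apply Rdiv_lt_0_compat; [apply cond_pos | exact HL]|].
  exists (2 * Nat.max N (Nat.max (2 * N0) 1) + 2)%nat. intros n Hn.
  set (p := (n / 2)%nat). set (r := (p / N0)%nat).
  assert (Hp := Nat.div_mod_eq n 2). assert (Hp' := Nat.mod_upper_bound n 2 ltac:(lia)).
  assert (Hr := Nat.div_mod_eq p N0). assert (Hr' := Nat.mod_upper_bound p N0 ltac:(lia)).
  fold p in Hp. fold r in Hr.
  assert (Hwins : INR r * g n <= K * sum_n_m g (S p) (S p + r * N0 - 1)).
  { apply mul_le_sum_windows; [lia|]. intros i Hi.
    assert (Hir : (S i * N0 <= r * N0)%nat) by (apply Nat.mul_le_mono_r; lia).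
    simpl in Hir. lia. }
  assert (Hsum : sum_n_m g (S p) (S p + r * N0 - 1) <= eps / L).
  { eapply Rle_trans; [|apply (HN p); lia]. apply sum_n_m_le_widen; [exact Hg | lia]. }
  assert (Hnr : INR n <= 6 * INR N0 * INR r).
  { replace (6 * INR N0 * INR r) with (INR (6 * N0 * r)) by (rewrite !mult_INR; simpl; ring).
    apply le_INR. lia. }
  rewrite Rminus_0_r, Rabs_pos_eq by (apply Rmult_le_pos; [apply pos_INR | apply Hg]).
  apply Rle_lt_trans with (6 * INR N0 * (INR r * g n)).
  - rewrite <- Rmult_assoc. apply Rmult_le_compat_r; [apply Hg | exact Hnr].
  - apply Rle_lt_trans with (6 * INR N0 * (K * (eps / L))).
    + apply Rmult_le_compat_l; [lra|]. eapply Rle_trans; [exact Hwins|].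
      apply Rmult_le_compat_l; [exact HK | exact Hsum].
    + replace (6 * INR N0 * (K * (eps / L))) with (K / (1 + K) * eps) by (unfold L; field; lra).
      assert (Heps := cond_pos eps).
      assert (HK1 : K / (1 + K) < 1)
        by (apply Rmult_lt_reg_r with (1 + K); [lra|]; field_simplify; lra).
      nra.
Qed.

End Windows.

Lemma max_block_le_sum (c : Z -> C) (N0 m : nat) :
  max_block c N0 m <= sum_n_m (fun j => Cmod (c (Z.of_nat j))) m (m + N0 - 1).
Proof.
  apply fold_right_Rmax_map_le; [apply sum_n_m_nonneg; intros; apply Cmod_ge_0|].
  intros j Hj. apply in_seq in Hj.
  apply (le_sum_n_m_of_nonneg (fun j => Cmod (c (Z.of_nat j)))); [intros; apply Cmod_ge_0 | lia].
Qed.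

Lemma Cmod_le_max_block (c : Z -> C) (N0 m : nat) : (1 <= N0)%nat ->
  Cmod (c (Z.of_nat m)) <= max_block c N0 m.
Proof. intros HN0. unfold max_block. destruct N0 as [|n0]; [lia|]. apply Rmax_l. Qed.

Lemma Cmod_le_window (c : Z -> C) (N0 : nat) (M : R) :
  (1 <= N0)%nat -> 0 <= M ->
  (forall m : nat, (1 <= m)%nat -> var_block c m <= M * max_block c N0 m) ->
  forall m n, (1 <= m)%nat -> (m <= n <= 2 * m)%nat ->
  Cmod (c (Z.of_nat n)) <= (1 + M) * sum_n_m (fun j => Cmod (c (Z.of_nat j))) m (m + N0 - 1).
Proof.
  intros HN0 HM Hvar m n Hm Hn.
  assert (Hmax := max_block_le_sum c N0 m).
  assert (Hcm := Cmod_le_max_block c N0 m HN0).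
  assert (Hv := Hvar m Hm). rewrite var_block_eq in Hv.
  assert (Hdiff : 0 <= sum_n_m (fun k => Cmod (c (Z.of_nat k) - c (Z.of_nat (S k)))%C) m (2 * m))
    by (apply sum_n_m_nonneg; intros; apply Cmod_ge_0).
  assert (Htele : Cmod (c (Z.of_nat n)) <= Cmod (c (Z.of_nat m))
            + sum_n_m (fun k => Cmod (c (Z.of_nat k) - c (Z.of_nat (S k)))%C) m (2 * m)).
  { destruct (Nat.eq_dec n m) as [->|Hnm]; [lra|].
    destruct n as [|n]; [lia|].
    eapply Rle_trans; [apply (Cmod_le_telescope (fun j => c (Z.of_nat j)) m n); lia|].
    apply Rplus_le_compat_l. apply sum_n_m_le_widen; [intros; apply Cmod_ge_0 | lia]. }
  nra.
Qed.

Theorem theorem1 (c : Z -> C) (theta0 : R)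
  (Htheta : 0 <= theta0 < PI / 2)
  (Hsect : forall n : nat, (1 <= n)%nat ->
     Ksector theta0 (Cplus (c (Z.of_nat n)) (c (- Z.of_nat n)%Z)) /\
     Ksector theta0 (Cminus (c (Z.of_nat n)) (c (- Z.of_nat n)%Z)))
  (N0 : nat) (HN0 : (1 <= N0)%nat) (M : R) (HM : 0 < M)
  (Hvar : forall m : nat, (1 <= m)%nat -> var_block c m <= M * max_block c N0 m) :
  (exists f : R -> C,
     (forall x : R, filterlim (fun n => Spart c n x) eventually (locally (f x))) /\
     (forall x : R, continuous f x) /\
     (forall x : R, f (x + 2 * PI) = f x) /\
     (forall eps : R, 0 < eps -> exists N : nat, forall n : nat, (N <= n)%nat ->
        forall x : R, Cmod (Cminus (f x) (Spart c n x)) <= eps))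
  <->
  (is_lim_seq (fun n : nat => INR n * Cmod (c (Z.of_nat n))) 0 /\
   ex_series (fun n : nat => Cmod (Cplus (c (Z.of_nat (S n))) (c (- Z.of_nat (S n))%Z)))).
Proof.
  split.
  - intros [f [_ [_ [_ Hf]]]].
    assert (HU := uniformly_cauchy_of_converges_uniformly (Spart c) f Hf).
    split.
    + apply (is_lim_seq_mul_of_windows _ N0 (1 + M)); try lra.
      * intros k. apply Cmod_ge_0.
      * exact HN0.
      * apply Cmod_le_window; [exact HN0 | lra | exact Hvar].
      * exact (block_sum_Cmod_vanishes c theta0 Htheta Hsect HU).
    + exact (ex_series_coef_plus c theta0 Htheta Hsect HU).
  - intros [Hlim Hser].
    destruct (uniformly_cauchy_converges_uniformly (Spart c)
                (Spart_uniformly_cauchy c N0 M (Rlt_le _ _ HM) Hvar Hlim Hser)) as [f Hf].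
    exists f. split; [|split; [|split]].
    + intros x. now apply converges_uniformly_pointwise.
    + intros x. apply (converges_uniformly_continuous (Spart c)); [|exact Hf].
      intros n. apply continuous_Spart.
    + apply (converges_uniformly_periodic (Spart c)); [|exact Hf].
      intros n x. apply Spart_periodic.
    + exact Hf.
Qed.
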